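(* Let $1<m<n$ and let $G=K_{m,n}$ be the uniform coloured complete bipartite graph with parts $V_1=\{1,\dots,m\}$ and $V_2=\{m+1,\dots,m+n\}$, with associated linear space $\mathcal L$. Let $E_1^c$ (resp. $E_2^c$) be the set of pairs of distinct vertices in $V_1$ (resp. $V_2$), and $E$ the set of edges $\{i,j\}$ with $i\in V_1$, $j\in V_2$. Then $r=3$, $s=5$, and the vector space of linear forms in $I(\mathcal L^{-1})$ is spanned by $x_{11}-x_{ii}$ ($i\in V_1$); $x_{m+1,m+1}-x_{ii}$ ($i\in V_2$); $x_{12}-x_{ij}$ ($\{i,j\}\in E_1^c$); $x_{m+1,m+2}-x_{ij}$ ($\{i,j\}\in E_2^c$); $x_{1,m+1}-x_{ij}$ ($\{i,j\}\in E$); $m\,x_{12}-n\,x_{m+n-1,m+n}$; and $m\,x_{11}-(n-m)\,x_{m+n-1,m+n}-m\,x_{m+n,m+n}$.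
   Context: For a simple graph $G$ on $V=\{1,\dots,N\}$, its uniform coloured version has one vertex colour and one edge colour, and its associated linear space is $\mathcal L=\{\lambda_1I_N+\lambda_2A_2:\lambda_1,\lambda_2\in\mathbb C\}\subseteq\mathbb S^N$, where $A_2$ is the 0/1 adjacency matrix of $G$. The reciprocal variety $\mathcal L^{-1}$ is the Zariski closure of $\{M^{-1}:M\in\mathcal L\text{ invertible}\}$, with vanishing ideal $I(\mathcal L^{-1})\subseteq\mathbb C[x_{ij}:1\le i\le j\le N]$, using $x_{ji}=x_{ij}$. Here $r$ is the number of distinct eigenvalues of $A_2$ and $s$ is the number of orbits of the automorphism group of $G$ acting on unordered pairs $\{i,j\}$ of (not necessarily distinct) vertices via $\{i,j\}\mapsto\{\sigma(i),\sigma(j)\}$. *)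

From HB Require Import structures.
From mathcomp Require Import all_boot all_order all_algebra.
From mathcomp Require Import fingroup perm.
Set Implicit Arguments. Unset Strict Implicit. Unset Printing Implicit Defensive.
Import Order.TTheory GRing.Theory Num.Theory.
Local Open Scope ring_scope.

(* Vertices of a graph on N vertices are 'I_N (vertex k+1 of the paper is k). *)

Definition Kmn_rel (m n : nat) : rel 'I_(m + n) :=
  fun i j => (i < m)%N != (j < m)%N.

Definition adjmx (C : nzRingType) (N : nat) (e : rel 'I_N) : 'M[C]_N :=
  \matrix_(i, j) (if e i j then 1 else 0).

Definition in_Lspace (C : nzRingType) (N : nat) (A : 'M[C]_N) (M : 'M[C]_N) : Prop :=
  exists l1 l2 : C, M = l1%:M + l2 *: A.

(** Points M^{-1}, M in L invertible (the set whose Zariski closure is L^{-1}). *)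
Definition recip_pt (C : fieldType) (N : nat) (A : 'M[C]_N) (X : 'M[C]_N) : Prop :=
  exists M, [/\ in_Lspace A M, M \in unitmx & X = invmx M].

(** Variables x_ij, i <= j, of C[x_ij : 1 <= i <= j <= N]. *)
Definition var (N : nat) := {p : 'I_N * 'I_N | (p.1 <= p.2)%N}.

(** A linear form sum_{i<=j} c_ij x_ij is given by its coefficient function. *)
Definition linform (C : fieldType) (N : nat) := {ffun var N -> C^o}.

Definition lin_eval (C : fieldType) (N : nat) (c : linform C N) (X : 'M[C]_N) : C :=
  \sum_(v : var N) c v * X (val v).1 (val v).2.

(** The linear form c lies in I(L^{-1}): it vanishes on all M^{-1}, M in L
    invertible (equivalently on their Zariski closure L^{-1}). *)
Definition linform_in_ideal (C : fieldType) (N : nat) (A : 'M[C]_N) (c : linform C N) : Prop :=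
  forall X, recip_pt A X -> lin_eval c X = 0.

(** The variable x_ij = x_ji as a linear form (indices as nats, 0-based). *)
Definition xv (C : fieldType) (N : nat) (i j : nat) : linform C N :=
  [ffun v : var N => if (((val v).1 : nat) == minn i j) && (((val v).2 : nat) == maxn i j)
                     then 1 else 0].

Definition num_eigenvalues_is (C : fieldType) (N : nat) (A : 'M[C]_N) (r : nat) : Prop :=
  exists s : seq C, [/\ uniq s, size s = r & forall a, eigenvalue A a <-> a \in s].

Definition is_aut (N : nat) (e : rel 'I_N) (g : {perm 'I_N}) : bool :=
  [forall i, forall j, e (g i) (g j) == e i j].

(** Unordered pairs {i,j} (i = j allowed) represented by ordered pairs; p ~ q iff
    some automorphism maps {p.1,p.2} to {q.1,q.2}. *)
Definition pair_rel (N : nat) (e : rel 'I_N) (p q : 'I_N * 'I_N) : bool :=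
  [exists g : {perm 'I_N}, is_aut e g &&
     (((g p.1, g p.2) == q) || ((g p.2, g p.1) == q))].

Definition num_pair_orbits (N : nat) (e : rel 'I_N) : nat :=
  #|[set [set q | pair_rel e p q] | p : 'I_N * 'I_N]|.

Definition Kmn_forms (C : fieldType) (m n : nat) : seq (linform C (m + n)) :=
  let x := @xv C (m + n) in
  [seq x 0 0 - x i i | i <- iota 0 m] ++
  [seq x m m - x i i | i <- iota m n] ++
  [seq x 0 1 - x p.1 p.2 | p <- [seq (i, j) | i <- iota 0 m, j <- iota 0 m] & (p.1 < p.2)%N] ++
  [seq x m m.+1 - x p.1 p.2 | p <- [seq (i, j) | i <- iota m n, j <- iota m n] & (p.1 < p.2)%N] ++
  [seq x 0 m - x i j | i <- iota 0 m, j <- iota m n] ++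
  [:: m%:R *: x 0 1 - n%:R *: x (m + n - 2)%N (m + n - 1)%N;
      m%:R *: x 0 0 - (n - m)%:R *: x (m + n - 2)%N (m + n - 1)%N
        - m%:R *: x (m + n - 1)%N (m + n - 1)%N].

Arguments Kmn_rel : clear implicits.
Arguments adjmx : clear implicits.
Arguments Kmn_forms : clear implicits.
Arguments adjmx C {N} e.

From HB Require Import structures.
From mathcomp Require Import all_boot all_order all_algebra.
From mathcomp Require Import fingroup perm.
From mathcomp Require Import ring zify.
Import Order.TTheory GRing.Theory Num.Theory.
Set Implicit Arguments. Unset Strict Implicit. Unset Printing Implicit Defensive.

(* Every unordered pair {i, j} of vertices has one of five types: a repeated
   vertex or two distinct vertices of V1, the same for V2, or an edge.
   - Orbits: as m <> n the two sides have different degrees, so Aut(K_{m,n})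
     preserves them; it then acts transitively on the pairs of each type: s = 5.
   - Spectrum: A^2 = Ksq (n on V1 x V1, m on V2 x V2, 0 across) and
     A Ksq = mn A, so the eigenvalues lie among 0, +-sqrt(mn); all occur: r = 3.
   - Reciprocal variety: the same identities give an explicit cofactor of
     l1 + l2 A in span{I, A, A^2}, so every point of L^{-1} is a matrix
     a + b A + c A^2, whose entries only depend on the type of the pair.
   - Linear forms: the listed forms vanish on such matrices, hence lie in
     I(L^{-1}).  Conversely, modulo the listed forms any linear form reduces to
     one representative variable per type weighted by its type sums, and
     evaluating at the inverses of I and I +- A forces the three relations
     between type sums that put this reduced form in the span. *)

Section PairType.
Variable m : nat.

(* Both the orbits of Aut(K_{m,n}) and the
   entries of the matrices of L^{-1} are constant on pairs of a given type. *)
Definition pair_type (i j : nat) : nat :=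
  if i == j then (if (i < m)%N then 0 else 1)
  else if (i < m)%N == (j < m)%N then (if (i < m)%N then 2 else 3) else 4.

Lemma pair_type_lt5 i j : (pair_type i j < 5)%N.
Proof. by rewrite /pair_type; case: (i == j); case: (i < m)%N; case: (j < m)%N. Qed.

Lemma pair_typeC i j : pair_type i j = pair_type j i.
Proof.
rewrite /pair_type [j == i]eq_sym [((j < m)%N == _)]eq_sym.
by case: (i =P j) => [->|] //; case: (i < m)%N; case: (j < m)%N.
Qed.

Lemma pair_type_V1 i j : (i < m)%N -> (j < m)%N -> pair_type i j = if i == j then 0 else 2.
Proof. by move=> hi hj; rewrite /pair_type hi hj; case: (i == j). Qed.

Lemma pair_type_V2 i j : (m <= i)%N -> (m <= j)%N -> pair_type i j = if i == j then 1 else 3.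
Proof. by move=> hi hj; rewrite /pair_type !ltnNge hi hj; case: (i == j). Qed.

Lemma pair_type_cross i j : (i < m)%N -> (m <= j)%N -> pair_type i j = 4.
Proof. by move=> hi hj; rewrite /pair_type hi ltnNge hj; case: eqP => // eij; lia. Qed.

Definition type_rep (t : nat) : nat * nat :=
  match t with 0 => (0, 0) | 1 => (m, m) | 2 => (0, 1) | 3 => (m, m.+1) | _ => (0, m) end%N.

Lemma type_repK t : (1 < m)%N -> (t < 5)%N ->
  pair_type (type_rep t).1 (type_rep t).2 = t.
Proof.
move=> m_gt1; have m_gt0 : (0 < m)%N by lia.
have hmS : (m == m.+1) = false by lia.
have hSm : (m.+1 < m)%N = false by lia.
have h0m : (0 == m) = false by lia.
case: t => [|[|[|[|[|t]]]]] //= _.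
all: by rewrite /pair_type /= ?ltnn ?m_gt0 ?m_gt1 ?hmS ?hSm ?h0m ?eqxx.
Qed.

Lemma type_rep_lt (N t : nat) : (m.+1 < N)%N ->
  ((type_rep t).1 < N)%N && ((type_rep t).2 < N)%N.
Proof. by move=> hN; case: t => [|[|[|[|[|t]]]]] /=; apply/andP; split; lia. Qed.
End PairType.

Section Automorphisms.
Variables m n : nat.
Local Notation N := (m + n).
Local Notation e := (Kmn_rel m n).
Local Notation ptype p := (pair_type m (p : 'I_N * 'I_N).1 p.2).

Lemma card_side (b : bool) : #|[set j : 'I_N | (j < m)%N == b]| = if b then m else n.
Proof.
rewrite -sum1_card big_mkcond big_split_ord /=.
rewrite (eq_bigr (fun _ => if b then 1 else 0)%N); last first.
  by move=> i _; rewrite inE /= ltn_ord; case: b.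
rewrite [X in (_ + X)%N](eq_bigr (fun _ => if b then 0 else 1)%N); last first.
  by move=> i _; rewrite inE /= ltnNge leq_addr; case: b.
by rewrite !sum_nat_const !card_ord; case: b; rewrite ?muln1 ?muln0 ?addn0.
Qed.

Lemma Kmn_degree i : #|[set j | e i j]| = if (i < m)%N then n else m.
Proof.
have -> : [set j | e i j] = [set j : 'I_N | (j < m)%N == ~~ (i < m)%N].
  by apply/setP => j; rewrite !inE /Kmn_rel; case: (i < m)%N; case: (j < m)%N.
by rewrite card_side; case: (i < m)%N.
Qed.

Lemma side_perm_aut (g : {perm 'I_N}) :
  (forall i, (g i < m)%N = (i < m)%N) -> is_aut e g.
Proof. by move=> h; apply/forallP => i; apply/forallP => j; rewrite /Kmn_rel !h. Qed.

(* Two ordered pairs with the same side pattern and the same equality pattern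
   are mapped to each other by a product of two side-preserving transpositions. *)
Lemma side_perm_exists (a b c d : 'I_N) :
  (a < m)%N = (c < m)%N -> (b < m)%N = (d < m)%N -> (a == b) = (c == d) ->
  exists g : {perm 'I_N}, [/\ is_aut e g, g a = c & g b = d].
Proof.
move=> hac hbd hab; pose s1 := tperm a c; pose s2 := tperm (s1 b) d.
have hs1 i : (s1 i < m)%N = (i < m)%N by rewrite /s1; case: tpermP => [->|->|].
have hs2 i : (s2 i < m)%N = (i < m)%N.
  by rewrite /s2; case: tpermP => [->|->|] //; rewrite hs1.
exists (s1 * s2)%g; split; last by rewrite permM /s2 tpermL.
  by apply: side_perm_aut => i; rewrite permM hs2 hs1.
rewrite permM {1}/s1 tpermL /s2; have [eab|nab] := eqVneq a b.
  by move: hab; rewrite -eab /s1 tpermL eqxx => /esym/eqP <-; rewrite tpermL.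
have ncd : c != d by rewrite -hab.
rewrite tpermD // 1?eq_sym //.
by rewrite /s1 -{1}(tpermL a c) (inj_eq perm_inj).
Qed.

Hypothesis m_neq_n : m != n.

(* As the two sides have different degrees, automorphisms preserve them. *)
Lemma aut_side (g : {perm 'I_N}) : is_aut e g -> forall i, (g i < m)%N = (i < m)%N.
Proof.
move=> /forallP ha i.
have : #|[set j | e (g i) j]| = #|[set j | e i j]|.
  rewrite -(card_preimset _ (@perm_inj _ g)).
  by apply: eq_card => j; rewrite !inE; move/forallP: (ha i) => /(_ j) /eqP.
by rewrite !Kmn_degree; case: (g i < m)%N; case: (i < m)%N => // h; move: m_neq_n; rewrite h eqxx.
Qed.

Lemma pair_type_aut (g : {perm 'I_N}) a b :
  is_aut e g -> pair_type m (g a) (g b) = pair_type m a b.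
Proof. by move=> ha; rewrite /pair_type val_eqE (inj_eq perm_inj) -val_eqE !(aut_side ha). Qed.

Lemma pair_relE p q : pair_rel e p q = (ptype p == ptype q).
Proof.
case: p q => a b [c d]; apply/idP/idP => [|htype].
  case/existsP => g /andP [ha /orP []] /eqP <-; first by rewrite pair_type_aut.
  by rewrite pair_type_aut // pair_typeC.
have [[h1 h2 h3]|[h1 h2 h3]] :
  [/\ (a < m)%N = (c < m)%N, (b < m)%N = (d < m)%N & (a == b) = (c == d)] \/
  [/\ (a < m)%N = (d < m)%N, (b < m)%N = (c < m)%N & (a == b) = (d == c)].
  move: htype; rewrite /pair_type /= !(inj_eq (@ord_inj _)) [d == c]eq_sym.
  have [<-|_] := eqVneq a b; have [<-|_] := eqVneq c d; rewrite ?eqxx;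
  case: (a < m)%N; case: (b < m)%N; case: (c < m)%N; case: (d < m)%N;
  move=> //= _; by [left | right].
- have [g [ga gb gc]] := side_perm_exists h1 h2 h3.
  by apply/existsP; exists g; rewrite ga gb gc eqxx.
- have [g [ga gb gc]] := side_perm_exists h1 h2 h3.
  by apply/existsP; exists g; rewrite ga gb gc eqxx orbT.
Qed.

Hypotheses (m_gt1 : (1 < m)%N) (n_gt1 : (1 < n)%N).

Lemma Kmn_pair_orbits : num_pair_orbits e = 5%N.
Proof.
rewrite /num_pair_orbits; pose class (t : 'I_5) := [set q : 'I_N * 'I_N | ptype q == t].
have hrep (t : 'I_5) : exists q : 'I_N * 'I_N, ptype q = t.
  have /andP [h1 h2] := @type_rep_lt m N t (ltac:(lia)).
  by exists (Ordinal h1, Ordinal h2); rewrite /= type_repK.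
have -> : [set [set q | pair_rel e p q] | p : 'I_N * 'I_N] = class @: setT.
  apply/setP => S; apply/imsetP/imsetP => [[p _ ->]|[t _ ->]].
    exists (Ordinal (pair_type_lt5 m p.1 p.2)) => //.
    by apply/setP => q; rewrite !inE pair_relE eq_sym.
  have [p hp] := hrep t; exists p => //.
  by apply/setP => q; rewrite !inE pair_relE hp eq_sym.
rewrite card_imset ?cardsT ?card_ord // => t1 t2 /setP eq12.
have [q hq] := hrep t1; move: (eq12 q); rewrite !inE hq eqxx => /esym/eqP.
exact: val_inj.
Qed.
End Automorphisms.

Local Open Scope ring_scope.

Lemma pencil_cofactor (R : comNzRingType) (N : nat) (A B : 'M[R]_N) (k l1 l2 : R) :
  A *m A = B -> A *m B = k *: A ->
  (l1%:M + l2 *: A) *m ((l1 ^+ 2 - l2 ^+ 2 * k)%:M + (- (l1 * l2)) *: A + l2 ^+ 2 *: B)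
  = (l1 * (l1 ^+ 2 - l2 ^+ 2 * k))%:M.
Proof.
move=> hAA hAB.
rewrite mulmxDl !mulmxDr !mul_scalar_mx !mul_mx_scalar.
rewrite -!scalemxAl -!scalemxAr hAA hAB !scalerA.
by apply/matrixP => i j; rewrite !mxE; ring.
Qed.

Section AdjacencyAlgebra.
Variable R : comNzRingType.
Variables m n : nat.
Local Notation N := (m + n).

Lemma sum_by_side (G : bool -> R) (F : 'I_N -> R) :
  (forall k, F k = G (k < m)%N) -> \sum_k F k = m%:R * G true + n%:R * G false.
Proof.
move=> hF; rewrite (eq_bigr _ (fun k _ => hF k)) big_split_ord /=.
rewrite (eq_bigr (fun _ => G true)); last by move=> i _; rewrite ltn_ord.
under [X in _ + X]eq_bigr do rewrite ltnNge leq_addr /=.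
by rewrite !sumr_const !card_ord !mulr_natl.
Qed.

Definition Kadj : 'M[R]_N := adjmx R (Kmn_rel m n).

Definition Ksq : 'M[R]_N :=
  \matrix_(i, j) (if (i < m)%N == (j < m)%N then (if (i < m)%N then n%:R else m%:R) else 0).

Lemma Kadj_sqr : Kadj *m Kadj = Ksq.
Proof.
apply/matrixP => i j; rewrite !mxE /Kmn_rel.
rewrite (@sum_by_side (fun b => (if (i < m)%N != b then 1 else 0) *
                                (if b != (j < m)%N then 1 else 0))); last first.
  by move=> k; rewrite !mxE.
by case: (i < m)%N; case: (j < m)%N; rewrite /= ?mulr1 ?mulr0 ?addr0 ?add0r.
Qed.

Lemma Kadj_Ksq : Kadj *m Ksq = (m * n)%:R *: Kadj.
Proof.
apply/matrixP => i j; rewrite !mxE /Kmn_rel natrM.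
rewrite (@sum_by_side (fun b => (if (i < m)%N != b then 1 else 0) *
   (if b == (j < m)%N then (if b then n%:R else m%:R) else 0))); last first.
  by move=> k; rewrite !mxE.
case: (i < m)%N; case: (j < m)%N;
  by rewrite /= ?(mulr1, mulr0, mul1r, mul0r, addr0, add0r) // mulrC.
Qed.

(* The matrices a + b A + c A^2; the reciprocal variety lies in their span. *)
Definition span_mx (a b c : R) : 'M[R]_N := a%:M + b *: Kadj + c *: Ksq.

Lemma span_mxZ (s a b c : R) : s *: span_mx a b c = span_mx (s * a) (s * b) (s * c).
Proof. by rewrite /span_mx !scalerDr scale_scalar_mx !scalerA. Qed.

Definition type_value (a b c : R) (t : nat) : R :=
  match t with
  | 0%N => a + c * n%:R | 1%N => a + c * m%:R | 2%N => c * n%:R | 3%N => c * m%:R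
  | _ => b
  end.

Lemma span_entry (a b c : R) (i j : 'I_N) :
  span_mx a b c i j = type_value a b c (pair_type m i j).
Proof.
rewrite !mxE /Kmn_rel /pair_type (inj_eq (@ord_inj _)).
have [<-|ne] := eqVneq i j; rewrite ?eqxx.
  by case: (i < m)%N; rewrite /= ?mulr1n ?mulr0 ?addr0 ?add0r.
rewrite mulr0n add0r.
by case: (i < m)%N; case: (j < m)%N; rewrite /= ?mulr1 ?mulr0 ?addr0 ?add0r.
Qed.
End AdjacencyAlgebra.

Section ReciprocalPoints.
Variable C : numFieldType.
Variables m n : nat.
Hypotheses (m_gt1 : (1 < m)%N) (n_gt0 : (0 < n)%N).
Local Notation N := (m + n).
Local Notation A := (Kadj C m n).

Definition pencil_det (l1 l2 : C) : C := l1 * (l1 ^+ 2 - l2 ^+ 2 * (m * n)%:R).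
Definition pencil_cof (l1 l2 : C) : 'M[C]_N :=
  span_mx m n (l1 ^+ 2 - l2 ^+ 2 * (m * n)%:R) (- (l1 * l2)) (l2 ^+ 2).

Lemma pencil_mul_cof l1 l2 : (l1%:M + l2 *: A) *m pencil_cof l1 l2 = (pencil_det l1 l2)%:M.
Proof. exact: pencil_cofactor (Kadj_sqr C m n) (Kadj_Ksq C m n). Qed.

(* An invertible member of L has a nonzero pencil determinant: otherwise its
   cofactor vanishes, and reading off two entries forces l1 = l2 = 0. *)
Lemma pencil_det_neq0 l1 l2 : l1%:M + l2 *: A \in unitmx -> pencil_det l1 l2 != 0.
Proof.
move=> hu; apply/eqP => hdet.
have hcof : pencil_cof l1 l2 = 0.
  by rewrite -[pencil_cof _ _](mulKmx hu) pencil_mul_cof hdet raddf0 mulmx0.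
have h0 : (0 < N)%N by lia.
have h1 : (1 < N)%N by lia.
have := congr1 (fun M : 'M[C]_N => M (Ordinal h0) (Ordinal h1)) hcof.
rewrite span_entry mxE /pair_type /= (ltn_trans _ m_gt1) // m_gt1 /= => /eqP.
have n_neq0 : (n == 0%N) = false by lia.
rewrite mulf_eq0 pnatr_eq0 n_neq0 orbF expf_eq0 /= => /eqP l2_0.
have := congr1 (fun M : 'M[C]_N => M (Ordinal h0) (Ordinal h0)) hcof.
rewrite span_entry mxE /pair_type /= (ltn_trans _ m_gt1) // l2_0 /=.
rewrite expr0n /= !(mul0r, subr0, addr0) => /eqP; rewrite expf_eq0 /= => /eqP l1_0.
by move: hu; rewrite l1_0 l2_0 scale0r addr0 unitmxE det_scalar expr0n /= (gtn_eqF h0) unitr0.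
Qed.

Lemma pencil_inv l1 l2 : pencil_det l1 l2 != 0 ->
  l1%:M + l2 *: A \in unitmx /\
  invmx (l1%:M + l2 *: A) = (pencil_det l1 l2)^-1 *: pencil_cof l1 l2.
Proof.
move=> hdet; have hM : (l1%:M + l2 *: A) *m ((pencil_det l1 l2)^-1 *: pencil_cof l1 l2) = 1%:M.
  by rewrite -scalemxAr pencil_mul_cof scale_scalar_mx mulVf.
have [hu _] := mulmx1_unit hM; split => //.
by rewrite -[RHS](mulKmx hu) hM mulmx1.
Qed.

Lemma recip_pt_span X : recip_pt A X -> exists a b c, X = span_mx m n a b c.
Proof.
case=> M [[l1 [l2 ->]] hu ->]; have [_ ->] := pencil_inv (pencil_det_neq0 hu).
by rewrite span_mxZ; do 3 eexists.
Qed.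

Lemma pencil_recip_pt l1 l2 : pencil_det l1 l2 != 0 ->
  recip_pt A ((pencil_det l1 l2)^-1 *: pencil_cof l1 l2).
Proof.
move=> hdet; have [hu hinv] := pencil_inv hdet.
by exists (l1%:M + l2 *: A); split => //; exists l1, l2.
Qed.
End ReciprocalPoints.

Section Eigenvalues.
Variable C : numClosedFieldType.
Variables m n : nat.
Hypotheses (m_gt1 : (1 < m)%N) (n_gt0 : (0 < n)%N).
Local Notation N := (m + n).
Local Notation A := (Kadj C m n).

(* Since A^3 = mn A, every eigenvalue a satisfies a (a^2 - mn) = 0. *)
Lemma Kadj_eigenvalue_root (a : C) : eigenvalue A a -> a * (a ^+ 2 - (m * n)%:R) = 0.
Proof.
move/eigenvalueP => [v hv v_neq0].
have hv2 : v *m A *m A = a ^+ 2 *: v by rewrite hv -scalemxAl hv scalerA -expr2.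
have : v *m (A *m Ksq C m n) = a ^+ 3 *: v.
  by rewrite -Kadj_sqr !mulmxA hv2 -scalemxAl hv scalerA -exprSr.
rewrite Kadj_Ksq -scalemxAr hv scalerA => /eqP.
rewrite -subr_eq0 -scalerBl scaler_eq0 (negbTE v_neq0) orbF => /eqP h.
by rewrite mulrBr -exprS mulrC -[RHS]oppr0 -h opprB.
Qed.

(* The vector equal to a on V1 and to m on V2 is an eigenvector for a = +-sqrt(mn). *)
Lemma Kadj_eigenvalue_sqrt (a : C) : a ^+ 2 = (m * n)%:R -> eigenvalue A a.
Proof.
move=> ha; have hm : (m < N)%N by lia.
apply/eigenvalueP; exists (\row_k (if (k < m)%N then a else m%:R)).
  apply/matrixP => i j; rewrite !mxE /Kmn_rel.
  rewrite (@sum_by_side _ m n (fun b => (if b then a else m%:R) *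
                                     (if b != (j < m)%N then 1 else 0))); last first.
    by move=> k; rewrite !mxE.
  case: (j < m)%N => /=; rewrite ?(mulr1, mulr0, addr0, add0r).
    by rewrite -expr2 ha natrM mulrC.
  by rewrite mulrC.
apply/eqP => /matrixP /(_ 0 (Ordinal hm)); rewrite !mxE /= ltnn => /eqP.
by rewrite pnatr_eq0; lia.
Qed.

(* The difference of the indicator vectors of two vertices of V1 is in the kernel. *)
Lemma Kadj_eigenvalue0 : eigenvalue A 0.
Proof.
have h0 : (0 < N)%N by lia.
have h1 : (1 < N)%N by lia.
apply/eigenvalueP; exists (delta_mx 0 (Ordinal h0) - delta_mx 0 (Ordinal h1)).
  rewrite scale0r mulmxBl -!rowE; apply/eqP; rewrite subr_eq0; apply/eqP.
  by apply/matrixP => i j; rewrite !mxE /Kmn_rel /= (ltn_trans _ m_gt1) ?m_gt1.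
apply/eqP => /matrixP /(_ 0 (Ordinal h0)); rewrite !mxE /=.
by move/eqP; rewrite subr0 oner_eq0.
Qed.

Lemma Kadj_num_eigenvalues : num_eigenvalues_is A 3.
Proof.
pose r := sqrtC ((m * n)%:R : C).
have hr : r ^+ 2 = (m * n)%:R by rewrite sqrtCK.
have r_neq0 : r != 0 by rewrite sqrtC_eq0 pnatr_eq0 muln_eq0 negb_or; apply/andP; split; lia.
exists [:: 0; r; - r]; split => //.
  have hrr : r != - r by rewrite -addr_eq0 -mulr2n mulrn_eq0 (negbTE r_neq0).
  by rewrite /= !inE negb_or eq_sym r_neq0 hrr eq_sym oppr_eq0 r_neq0.
move=> a; split.
  move/Kadj_eigenvalue_root/eqP; rewrite mulf_eq0 subr_eq0 -hr eqf_sqr !inE.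
  by case/orP => [->|/orP[]->]; rewrite ?orbT.
rewrite !inE => /orP [/eqP->|/orP [/eqP->|/eqP->]]; first exact: Kadj_eigenvalue0.
  exact: Kadj_eigenvalue_sqrt.
by apply: Kadj_eigenvalue_sqrt; rewrite sqrrN.
Qed.
End Eigenvalues.

Section LinearForms.
Variables (C : fieldType) (N : nat).
Local Notation LF := (linform C N).
Local Notation x := (@xv C N).

Lemma lin_evalD (c1 c2 : LF) X : lin_eval (c1 + c2) X = lin_eval c1 X + lin_eval c2 X.
Proof. by rewrite /lin_eval -big_split; apply: eq_bigr => v _; rewrite !ffunE mulrDl. Qed.

Lemma lin_evalZ a (c : LF) X : lin_eval (a *: c) X = a * lin_eval c X.
Proof. by rewrite /lin_eval mulr_sumr; apply: eq_bigr => v _; rewrite !ffunE mulrA. Qed.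

Lemma lin_evalB (c1 c2 : LF) X : lin_eval (c1 - c2) X = lin_eval c1 X - lin_eval c2 X.
Proof. by rewrite lin_evalD -scaleN1r lin_evalZ mulN1r. Qed.

Lemma lin_eval_sum I (r : seq I) (F : I -> LF) X :
  lin_eval (\sum_(i <- r) F i) X = \sum_(i <- r) lin_eval (F i) X.
Proof.
have lin_eval0 : lin_eval 0 X = 0 by rewrite /lin_eval big1 // => v _; rewrite ffunE mul0r.
exact: (big_morph (fun c : LF => lin_eval c X) (fun c1 c2 => lin_evalD c1 c2 X) lin_eval0).
Qed.

Lemma lin_evalZr (c : LF) a X : lin_eval c (a *: X) = a * lin_eval c X.
Proof. by rewrite /lin_eval mulr_sumr; apply: eq_bigr => v _; rewrite mxE mulrCA. Qed.

Lemma linform_decomp (c : LF) : c = \sum_(v : var N) c v *: x (val v).1 (val v).2.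
Proof.
apply/ffunP => w; rewrite sum_ffunE (bigD1 w) //= big1 ?addr0.
  case: w => [[p1 p2] hp]; rewrite !ffunE /= (minn_idPl hp) (maxn_idPr hp) !eqxx.
  by rewrite [_ *: _]mulr1.
move=> v hv; rewrite !ffunE; case: ifP => [/andP [h1 h2]|_]; last by rewrite [_ *: _]mulr0.
case: v hv h1 h2 => [[p1 p2] hp] /= hv; rewrite (minn_idPl hp) (maxn_idPr hp) => h1 h2.
case/eqP: hv; apply: val_inj; case: w h1 h2 => [[q1 q2] hq] /= h1 h2.
by congr pair; apply: val_inj; apply/eqP; rewrite eq_sym.
Qed.

Lemma lin_eval_xv (f : nat -> nat -> C) i j : (i < N)%N -> (j < N)%N ->
  (forall k l, f k l = f l k) -> lin_eval (x i j) (\matrix_(k, l) f k l) = f i j.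
Proof.
move=> hi hj hf.
have hmin : (minn i j < N)%N by lia.
have hmax : (maxn i j < N)%N by lia.
have hle : (minn i j <= maxn i j)%N by lia.
pose v0 : var N := exist _ (Ordinal hmin, Ordinal hmax) hle.
rewrite /lin_eval (bigD1 v0) //= big1 ?addr0.
  rewrite !ffunE !mxE /= !eqxx mul1r.
  by case: (leqP i j) => _ //; rewrite hf.
move=> v hv; rewrite !ffunE; case: ifP => [/andP [h1 h2]|_]; last by rewrite mul0r.
case/eqP: hv; apply: val_inj; case: v h1 h2 => [[p1 p2] hp] /= h1 h2.
by congr pair; apply: val_inj; apply/eqP.
Qed.
End LinearForms.

Section KmnForms.
Variable C : numFieldType.
Variables m n : nat.
Hypotheses (m_gt1 : (1 < m)%N) (m_lt_n : (m < n)%N).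
Local Notation N := (m + n).
Local Notation LF := (linform C N).
Local Notation x := (@xv C N).
Local Notation KF := (Kmn_forms C m n).
Local Notation tval := (type_value m n).

Lemma lin_eval_x_span a b c i j : (i < N)%N -> (j < N)%N ->
  lin_eval (x i j) (span_mx m n a b c) = tval a b c (pair_type m i j).
Proof.
move=> hi hj.
have -> : span_mx m n a b c = \matrix_(k, l) tval a b c (pair_type m k l).
  by apply/matrixP => k l; rewrite span_entry mxE.
rewrite (@lin_eval_xv _ _ (fun k l => tval a b c (pair_type m k l))) //.
by move=> k l; rewrite pair_typeC.
Qed.

Lemma same_type_vanish a b c i j k l : (i < N)%N -> (j < N)%N -> (k < N)%N -> (l < N)%N ->
  pair_type m i j = pair_type m k l -> lin_eval (x i j - x k l) (span_mx m n a b c) = 0.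
Proof. by move=> hi hj hk hl htype; rewrite lin_evalB !lin_eval_x_span // htype subrr. Qed.

(* Every listed form vanishes on span{I, A, A^2}: the first five families are
   differences of variables of equal type, the last two are checked directly. *)
Lemma Kmn_forms_vanish a b c f : f \in KF -> lin_eval f (span_mx m n a b c) = 0.
Proof.
rewrite /Kmn_forms !mem_cat.
case/orP => [/mapP [i] |]; first rewrite mem_iota => hi ->.
  by apply: same_type_vanish; rewrite ?pair_type_V1 ?eqxx //; lia.
case/orP => [/mapP [i] |]; first rewrite mem_iota => hi ->.
  by apply: same_type_vanish; rewrite ?pair_type_V2 ?eqxx //; lia.
case/orP => [/mapP [[i j]] |].
  rewrite mem_filter => /andP [/= hij /allpairsP [[i' j'] [/= hi hj [ei ej]]]] ->; subst i' j'.
  move: hi hj; rewrite !mem_iota => hi hj.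
  by apply: same_type_vanish; rewrite ?pair_type_V1 ?(ltn_eqF hij) //=; lia.
case/orP => [/mapP [[i j]] |].
  rewrite mem_filter => /andP [/= hij /allpairsP [[i' j'] [/= hi hj [ei ej]]]] ->; subst i' j'.
  move: hi hj; rewrite !mem_iota => hi hj.
  by apply: same_type_vanish; rewrite ?pair_type_V2 ?(ltn_eqF hij) ?(ltn_eqF (ltnSn m)) //=; lia.
case/orP => [/allpairsP [[i j] [/= hi hj ->]] |].
  move: hi hj; rewrite !mem_iota => hi hj.
  by apply: same_type_vanish; rewrite ?pair_type_cross //=; lia.
have hlast : (N - 2 == N - 1)%N = false by lia.
rewrite !inE => /orP [] /eqP ->; rewrite !lin_evalB !lin_evalZ !lin_eval_x_span; try lia.
  by rewrite pair_type_V1 ?pair_type_V2 ?hlast //=; [ring | lia ..].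
rewrite pair_type_V1 ?pair_type_V2 ?hlast ?eqxx //=; try lia.
by rewrite natrB; [ring | lia].
Qed.

Lemma Kmn_span_sub_ideal c : c \in <<KF>>%VS -> linform_in_ideal (Kadj C m n) c.
Proof.
move=> hc X /(recip_pt_span m_gt1 (ltn_trans (ltnW m_gt1) m_lt_n)) [a [b [c' ->]]].
rewrite (@coord_span _ _ _ (in_tuple KF) c hc) lin_eval_sum big1 // => i _.
by rewrite lin_evalZ Kmn_forms_vanish ?mulr0 // mem_nth.
Qed.

Lemma diag1_form_mem i : (i < m)%N -> x 0 0 - x i i \in KF.
Proof.
move=> hi; rewrite /Kmn_forms mem_cat; apply/orP; left.
by apply/mapP; exists i; rewrite // mem_iota.
Qed.

Lemma diag2_form_mem i : (m <= i)%N -> (i < N)%N -> x m m - x i i \in KF.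
Proof.
move=> h1 h2; rewrite /Kmn_forms !mem_cat; apply/orP; right; apply/orP; left.
by apply/mapP; exists i; rewrite // mem_iota h1.
Qed.

Lemma off1_form_mem i j : (i < j)%N -> (j < m)%N -> x 0 1 - x i j \in KF.
Proof.
move=> h1 h2; rewrite /Kmn_forms !mem_cat; do 2 (apply/orP; right); apply/orP; left.
apply/mapP; exists (i, j) => //; rewrite mem_filter h1 /=.
by apply/allpairsP; exists (i, j); rewrite !mem_iota /=; split => //; lia.
Qed.

Lemma off2_form_mem i j : (m <= i)%N -> (i < j)%N -> (j < N)%N -> x m m.+1 - x i j \in KF.
Proof.
move=> h0 h1 h2; rewrite /Kmn_forms !mem_cat; do 3 (apply/orP; right); apply/orP; left.
apply/mapP; exists (i, j) => //; rewrite mem_filter h1 /=.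
by apply/allpairsP; exists (i, j); rewrite !mem_iota /=; split => //; lia.
Qed.

Lemma edge_form_mem i j : (i < m)%N -> (m <= j)%N -> (j < N)%N -> x 0 m - x i j \in KF.
Proof.
move=> h0 h1 h2; rewrite /Kmn_forms !mem_cat; do 4 (apply/orP; right); apply/orP; left.
by apply/allpairsP; exists (i, j); rewrite !mem_iota /=; split => //; lia.
Qed.

Lemma type_rep_residual i j : (i <= j)%N -> (j < N)%N ->
  x i j - x (type_rep m (pair_type m i j)).1 (type_rep m (pair_type m i j)).2 \in <<KF>>%VS.
Proof.
move=> hij hj; rewrite -opprB rpredN; apply: memv_span.
have [hi|hi] := ltnP i m; have [hj'|hj'] := ltnP j m.
- rewrite pair_type_V1 //; have [eij|ne] := eqVneq i j.
    by subst j; exact: diag1_form_mem hi.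
  by apply: off1_form_mem hj'; rewrite ltn_neqAle ne hij.
- by rewrite pair_type_cross //; exact: edge_form_mem hi hj' hj.
- lia.
- rewrite pair_type_V2 //; have [eij|ne] := eqVneq i j.
    by subst j; exact: diag2_form_mem hi hj.
  by apply: off2_form_mem hi _ hj; rewrite ltn_neqAle ne hij.
Qed.

Definition type_sum (phi : LF) (t : nat) : C :=
  \sum_(v : var N | pair_type m (val v).1 (val v).2 == t) phi v.

Lemma sum_by_type (V : lmodType C) (phi : LF) (F : nat -> V) :
  \sum_(v : var N) phi v *: F (pair_type m (val v).1 (val v).2)
  = \sum_(t < 5) type_sum phi t *: F t.
Proof.
rewrite (partition_big (fun v : var N => Ordinal (pair_type_lt5 m (val v).1 (val v).2)) xpredT) //=.
apply: eq_bigr => t _; rewrite /type_sum scaler_suml.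
by apply: eq_big => [v | v /eqP <-].
Qed.

(* On span{I, A, A^2}, phi only sees three combinations of its type sums,
   namely its values at I, A and A^2. *)
Lemma lin_eval_span (phi : LF) a b c :
  lin_eval phi (span_mx m n a b c) =
  a * (type_sum phi 0 + type_sum phi 1) + b * type_sum phi 4
  + c * (n%:R * type_sum phi 0 + m%:R * type_sum phi 1 + n%:R * type_sum phi 2
         + m%:R * type_sum phi 3).
Proof.
have -> : lin_eval phi (span_mx m n a b c) = \sum_(t < 5) type_sum phi t * tval a b c t.
  rewrite -[RHS](sum_by_type (V := C^o)).
  by apply: eq_bigr => v _; rewrite span_entry.
by rewrite !big_ord_recr big_ord0 /=; ring.
Qed.

Lemma type_comb_in_span (S : nat -> C) :
  S 0%N + S 1%N = 0 -> S 4%N = 0 ->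
  n%:R * S 0%N + m%:R * S 1%N + n%:R * S 2%N + m%:R * S 3%N = 0 ->
  \sum_(t < 5) S t *: x (type_rep m t).1 (type_rep m t).2 \in <<KF>>%VS.
Proof.
move=> hdiag hedge hsq; rewrite !big_ord_recr big_ord0 /= add0r.
(* y and z are the representatives of types 3 and 1 used by the last two forms. *)
pose y := x (N - 2) (N - 1); pose z := x (N - 1) (N - 1).
pose form_off := m%:R *: x 0 1 - n%:R *: y.
pose form_diag := m%:R *: x 0 0 - (n - m)%:R *: y - m%:R *: z.
have form_off_mem : form_off \in KF.
  by rewrite /Kmn_forms !mem_cat; do 5 (apply/orP; right); rewrite inE eqxx.
have form_diag_mem : form_diag \in KF.
  by rewrite /Kmn_forms !mem_cat; do 5 (apply/orP; right); rewrite !inE eqxx orbT.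
have m_neq0 : m%:R != 0 :> C by rewrite pnatr_eq0; lia.
have -> : S 0%N *: x 0 0 + S 1%N *: x m m + S 2%N *: x 0 1 + S 3%N *: x m m.+1
          + S 4%N *: x 0 m
  = (S 0%N / m%:R) *: form_diag + (S 2%N / m%:R) *: form_off - S 0%N *: (x m m - z)
    + S 3%N *: (x m m.+1 - y) + S 4%N *: x 0 m + (S 0%N + S 1%N) *: x m m
    + ((n%:R * S 0%N + m%:R * S 1%N + n%:R * S 2%N + m%:R * S 3%N
        - m%:R * (S 0%N + S 1%N)) / m%:R) *: y.
  apply/ffunP => v; rewrite !ffunE natrB; last lia.
  by rewrite /GRing.scale /=; field.
rewrite hsq hdiag hedge mulr0 subr0 mul0r !scale0r !addr0.
apply: rpredD; first apply: rpredB; first apply: rpredD.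
- by apply: rpredZ; apply: memv_span.
- by apply: rpredZ; apply: memv_span.
- by apply: rpredZ; apply: memv_span; apply: diag2_form_mem; lia.
- by apply: rpredZ; apply: memv_span; apply: off2_form_mem; lia.
Qed.

Lemma linform_type_residual (phi : LF) :
  phi - \sum_(t < 5) type_sum phi t *: x (type_rep m t).1 (type_rep m t).2 \in <<KF>>%VS.
Proof.
rewrite -(sum_by_type phi (fun t => x (type_rep m t).1 (type_rep m t).2)).
rewrite {1}(linform_decomp phi) -sumrB.
apply: rpred_sum => v _; rewrite -scalerBr; apply: rpredZ.
exact: type_rep_residual (svalP v) (ltn_ord _).
Qed.

(* A form in I(L^{-1}) vanishes at the (scaled) inverses of I and of I +- A,
   which yields the three relations between its type sums. *)
Lemma ideal_type_relations (phi : LF) : linform_in_ideal (Kadj C m n) phi ->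
  [/\ type_sum phi 0 + type_sum phi 1 = 0, type_sum phi 4 = 0 &
      n%:R * type_sum phi 0 + m%:R * type_sum phi 1 + n%:R * type_sum phi 2
      + m%:R * type_sum phi 3 = 0].
Proof.
move=> hphi; have n_gt0 : (0 < n)%N by lia.
have at_cof l1 l2 : pencil_det m n l1 l2 != 0 -> lin_eval phi (pencil_cof m n l1 l2) = 0.
  move=> hdet; have := hphi _ (pencil_recip_pt hdet).
  by rewrite lin_evalZr => /eqP; rewrite mulf_eq0 invr_eq0 (negbTE hdet) => /eqP.
have mn_neq1 : (m * n)%:R != 1 :> C by rewrite pnatr_eq1 muln_eq1; lia.
have det10 : pencil_det m n (1 : C) 0 != 0.
  by rewrite /pencil_det expr0n /= mul0r subr0 expr1n mul1r oner_eq0.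
have det1 (s : C) : s ^+ 2 = 1 -> pencil_det m n 1 s != 0.
  by move=> hs; rewrite /pencil_det hs expr1n !mul1r subr_eq0 eq_sym.
have sqrN1 : (-1 : C) ^+ 2 = 1 by rewrite sqrrN expr1n.
have := at_cof _ _ det10; have := at_cof _ _ (det1 1 (expr1n _ _)).
have := at_cof _ _ (det1 (-1) sqrN1).
rewrite /pencil_cof !lin_eval_span expr0n expr1n sqrN1 /=.
rewrite !(mul1r, mulr1, mul0r, mulr0, subr0, oppr0, addr0).
move=> hminus hplus hdiag.
rewrite hdiag mulr0 add0r opprK mul1r in hminus.
rewrite hdiag mulr0 add0r mulN1r in hplus.
move/eqP: hplus; rewrite addrC subr_eq0 => /eqP hK.
move/eqP: hminus; rewrite hK -mulr2n mulrn_eq0 /= => /eqP hedge.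
by split => //; rewrite hK.
Qed.

Lemma Kmn_ideal_sub_span (phi : LF) : linform_in_ideal (Kadj C m n) phi -> phi \in <<KF>>%VS.
Proof.
case/ideal_type_relations => hdiag hedge hsq.
rewrite -[phi](subrK (\sum_(t < 5) type_sum phi t *: x (type_rep m t).1 (type_rep m t).2)).
by apply: rpredD; [exact: linform_type_residual | exact: type_comb_in_span].
Qed.
End KmnForms.

Theorem mainTheorem6 (C : numClosedFieldType) (m n : nat) :
  (1 < m)%N -> (m < n)%N ->
  [/\ num_eigenvalues_is (adjmx C (Kmn_rel m n)) 3,
      num_pair_orbits (Kmn_rel m n) = 5%N &
      forall c : linform C (m + n),
        linform_in_ideal (adjmx C (Kmn_rel m n)) c <-> c \in <<Kmn_forms C m n>>%VS].
Proof.
move=> m_gt1 m_lt_n; have n_gt1 : (1 < n)%N := ltn_trans m_gt1 m_lt_n.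
split.
- exact: Kadj_num_eigenvalues m_gt1 (ltnW n_gt1).
- exact: Kmn_pair_orbits (negbT (ltn_eqF m_lt_n)) m_gt1 n_gt1.
- by move=> c; split; [exact: Kmn_ideal_sub_span | exact: Kmn_span_sub_ideal].
Qed.
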